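(* Let $X$ be a locally convex Hausdorff space which has a predual $(Y,\varphi)$ with $Y$ quasi-barrelled. Then the map $\Phi_\varphi\colon Y\to X_b'$, $y\mapsto[x\mapsto\varphi(x)(y)]$, is a topological isomorphism onto its range.
   Context: For a locally convex Hausdorff space $Z$, $Z_b'$ denotes its dual equipped with the topology of uniform convergence on bounded subsets of $Z$ (strong dual). A predual of $X$ is a pair $(Y,\varphi)$ of a locally convex Hausdorff space $Y$ and a topological isomorphism $\varphi\colon X\to Y_b'$. *)

(* MathComp + MathComp-Analysis (tvs.v: tvsType = locally convex tvs). *)
From mathcomp Require Import all_boot all_order all_algebra.
From mathcomp Require Import all_classical all_reals all_analysis.
From mathcomp Require Import complex.
Import numFieldNormedType.Exports.

Set Implicit Arguments.
Unset Strict Implicit.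
Unset Printing Implicit Defensive.
Import Order.TTheory GRing.Theory Num.Theory.
Local Open Scope classical_set_scope.
Local Open Scope ring_scope.

Definition RC (R : realType) (b : bool) : numFieldType :=
  if b then (R : numFieldType) else ((R[i])%C : numFieldType).

Section lcs_notions.
Context {K : numFieldType}.

Definition absorbs (E : tvsType K) (U B : set E) : Prop :=
  exists2 r : K, 0 < r & forall l : K, r <= `|l| -> B `<=` [set l *: u | u in U].

Definition tvs_bounded (E : tvsType K) (B : set E) : Prop :=
  forall U : set E, nbhs (0 : E) U -> absorbs U B.

Definition absorbing (E : tvsType K) (U : set E) : Prop :=
  forall x : E, absorbs U [set x].

Definition balanced (E : tvsType K) (U : set E) : Prop :=
  forall l : K, `|l| <= 1 -> [set l *: u | u in U] `<=` U.

Definition absolutely_convex (E : tvsType K) (U : set E) : Prop :=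
  @convex_set K E U /\ balanced U.

Definition barrel (E : tvsType K) (U : set E) : Prop :=
  [/\ closed U, absolutely_convex U & absorbing U].

Definition bornivorous (E : tvsType K) (U : set E) : Prop :=
  forall B : set E, tvs_bounded B -> absorbs U B.

Definition quasi_barrelled (E : tvsType K) : Prop :=
  forall U : set E, barrel U -> bornivorous U -> nbhs (0 : E) U.

Definition cont_linear (E : tvsType K) (f : E -> K) : Prop :=
  (forall (a : K) (x y : E), f (a *: x + y) = a * f x + f y) /\ continuous f.

(* open subsets of the strong dual E_b' (topology of uniform convergence on
   bounded subsets of E), viewed as subsets of the set of continuous linear
   functionals E -> K. *)
Definition strong_open (E : tvsType K) (V : set (E -> K)) : Prop :=
  V `<=` @cont_linear E /\
  forall f, V f -> exists B : set E, tvs_bounded B /\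
    exists2 e : K, 0 < e &
      [set g | cont_linear g /\ forall y, B y -> `|g y - f y| < e] `<=` V.

Definition top_iso_onto_range (E F : tvsType K) (T : E -> (F -> K)) : Prop :=
  [/\ forall x, cont_linear (T x),
      forall (a : K) (x y : E) (z : F), T (a *: x + y) z = a * T x z + T y z,
      injective T,
      forall V, strong_open V -> open (T @^-1` V)
    & forall U : set E, open U ->
        exists V, strong_open V /\ T @` U = V `&` range T].

Definition top_iso_dual (E F : tvsType K) (T : E -> (F -> K)) : Prop :=
  top_iso_onto_range T /\ (forall f, cont_linear f -> exists x, T x = f).

End lcs_notions.

(* Each y in Y gives the functional Phi y = phi ^~ y on X; it is continuous
   because evaluation at y is a continuous seminorm on Y_b' and phi is
   continuous.  Hahn-Banach separates the points of the Hausdorff locally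
   convex space Y by elements of Y', all of the form phi x, so Phi is
   injective.  A basic strong 0-neighbourhood of X_b' pulls back along Phi to a
   polar [y | sup_(x in B) |phi x y| <= e] of a bounded B in X: it is a barrel,
   and it is bornivorous because phi maps B to a strongly bounded set, which is
   uniformly bounded on bounded subsets of Y; so it is a 0-neighbourhood since
   Y is quasi-barrelled, and Phi is continuous.  Conversely, a 0-neighbourhood
   W of Y contains an absolutely convex one C, and by the bipolar theorem W
   contains the polar of the set B of those x with |phi x| <= 1 on C; B is
   bounded in X because its image is equicontinuous, hence strongly bounded,
   and phi^-1 is continuous. *)

From mathcomp Require Import all_boot all_order all_algebra.
From mathcomp Require Import all_classical all_reals all_analysis.
From mathcomp Require Import complex.
From mathcomp Require Import ring lra.
Import numFieldNormedType.Exports.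

Set Implicit Arguments.
Unset Strict Implicit.
Unset Printing Implicit Defensive.
Import Order.TTheory GRing.Theory Num.Theory.
Local Open Scope classical_set_scope.
Local Open Scope ring_scope.

Lemma Zorn_bigcup_nonempty T (P : set (set T)) (G0 : set T) :
  P G0 -> G0 !=set0 ->
  (forall F, F `<=` P -> F !=set0 -> total_on F subset ->
     P (\bigcup_(X in F) X)) ->
  exists A, P A /\ forall B, A `<` B -> ~ P B.
Proof.
move=> PG0 [g0 G0g0] P_chain.
pose P' A := P A \/ A = set0.
have [F FP' Ftot|A [P'A Amax]] := @Zorn_bigcup T P'.
  pose F' := [set A | F A /\ P A].
  have -> : \bigcup_(X in F) X = \bigcup_(X in F') X.
    apply/seteqP; split => x [X FX Xx]; last by exists X => //; case: FX.
    by exists X => //; split => //; case: (FP' _ FX) => // X0; rewrite X0 in Xx.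
  have [->|/set0P F'0] := eqVneq F' set0; first by right; exact: bigcup_set0.
  by left; apply: P_chain => // [X []//|X Y [FX _] [FY _]]; exact: Ftot.
exists A; split; last by move=> B AB PB; apply: (Amax B AB); left.
case: P'A => // A0; exfalso; apply: (Amax G0); last by left.
by rewrite A0; split; [exact: sub0set|move=> /(_ g0 G0g0)].
Qed.

(* A real scalar action [sc] on a Z-module, rather than an [lmodType R]
   structure, so that complex vector spaces can be viewed as real ones. *)
Section real_scaling.
Variables (R : realType) (V : zmodType) (sc : R -> V -> V).
Hypotheses (scDr : forall a x y, sc a (x + y) = sc a x + sc a y)
  (scDl : forall a b x, sc (a + b) x = sc a x + sc b x)
  (scA : forall a b x, sc a (sc b x) = sc (a * b) x)
  (sc1 : forall x, sc 1 x = x).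

Lemma sc0 x : sc 0 x = 0.
Proof. by apply: (@addrI _ (sc 0 x)); rewrite -scDl !addr0. Qed.

Lemma scr0 a : sc a 0 = 0.
Proof. by rewrite -(sc0 0) scA mulr0. Qed.

Lemma scN1 x : sc (-1) x = - x.
Proof. by apply: (@addrI _ x); rewrite subrr -{1}(sc1 x) -scDl subrr sc0. Qed.

Lemma scKV s x w : s != 0 -> sc s (sc s^-1 x + w) = x + sc s w.
Proof. by move=> s0; rewrite scDr scA mulfV // sc1. Qed.

Section hahn_banach.
Variables (p : V -> R) (y : V).
Hypotheses (p_sub : forall x x', p (x + x') <= p x + p x')
  (p_hom : forall a x, 0 <= a -> p (sc a x) = a * p x).

Lemma sublinear0 : p 0 = 0.
Proof. by rewrite -(sc0 0) p_hom // mul0r. Qed.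

(* Partial extensions are handled through their graphs, so that Zorn's lemma
   on sets applies. *)
Definition dominated_graph (G : set (V * R)) :=
  [/\ forall x a x' a' t, G (x, a) -> G (x', a') -> G (sc t x + x', t * a + a'),
      forall x a, G (x, a) -> a <= p x & G (y, p y)].

Lemma dominated_graph00 G : dominated_graph G -> G (0, 0).
Proof.
by case=> G_lin _ Gy; have := G_lin _ _ _ _ (-1) Gy Gy; rewrite scN1 mulN1r !addNr.
Qed.

Lemma dominated_graphZ G t x a : dominated_graph G -> G (x, a) -> G (sc t x, t * a).
Proof.
move=> GG Ga; have [G_lin _ _] := GG.
by have := G_lin _ _ _ _ t Ga (dominated_graph00 GG); rewrite !addr0.
Qed.

Lemma dominated_graph_functional G x a a' :
  dominated_graph G -> G (x, a) -> G (x, a') -> a = a'.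
Proof.
move=> [G_lin G_le _] Ga Ga'.
have := G_le _ _ (G_lin _ _ _ _ (-1) Ga Ga').
have := G_le _ _ (G_lin _ _ _ _ (-1) Ga' Ga).
by rewrite scN1 addNr sublinear0 !mulN1r; lra.
Qed.

Lemma dominated_graph_bigcup (F : set (set (V * R))) : F !=set0 ->
  F `<=` dominated_graph -> total_on F subset ->
  dominated_graph (\bigcup_(G in F) G).
Proof.
move=> [G0 FG0] Fdom Ftot; split.
- move=> x a x' a' t [G1 FG1 G1a] [G2 FG2 G2a'].
  have [G12|G21] := Ftot _ _ FG1 FG2.
    have [G_lin _ _] := Fdom _ FG2.
    by exists G2 => //; exact: G_lin (G12 _ G1a) G2a'.
  have [G_lin _ _] := Fdom _ FG1.
  by exists G1 => //; exact: G_lin G1a (G21 _ G2a').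
- by move=> x a [G FG Ga]; have [_ G_le _] := Fdom _ FG; exact: G_le.
- by exists G0 => //; have [_ _ Gy] := Fdom _ FG0.
Qed.

(* The value [c] assigned to a new direction [z] must lie in this gap. *)
Lemma dominated_graph_gap G z : dominated_graph G -> exists c,
  forall x a, G (x, a) -> a - p (x - z) <= c /\ c <= p (x + z) - a.
Proof.
move=> GG; have [G_lin G_le _] := GG.
pose S := [set r | exists x a, G (x, a) /\ r = a - p (x - z)].
have S_ub x' a' : G (x', a') -> ubound S (p (x' + z) - a').
  move=> Ga' _ [x [a [Ga ->]]].
  have := G_le _ _ (G_lin _ _ _ _ 1 Ga Ga'); rewrite sc1 mul1r.
  have := p_sub (x - z) (x' + z); rewrite addrACA addNr addr0; lra.
have G00 := dominated_graph00 GG.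
have S_sup : has_sup S.
  by split; [exists (0 - p (0 - z)), 0, 0|exists (p (0 + z) - 0); exact: S_ub].
exists (sup S) => x a Ga; split.
  by apply: sup_upper_bound => //; exists x, a.
by apply: ge_sup; [case: S_sup|exact: S_ub].
Qed.

Lemma dominated_graph_le_extension G z c x a t :
  dominated_graph G ->
  (forall x a, G (x, a) -> a - p (x - z) <= c /\ c <= p (x + z) - a) ->
  G (x, a) -> a + t * c <= p (x + sc t z).
Proof.
move=> GG gap Ga; have [_ G_le _] := GG.
have [t0|t0|->] := ltgtP t 0; last by rewrite sc0 mul0r !addr0; exact: G_le.
- have s0 : 0 < - t by rewrite oppr_gt0.
  have [+ _] := gap _ _ (dominated_graphZ (- t)^-1 GG Ga).
  move=> /(ler_wpM2l (ltW s0)); rewrite mulrBr mulrA mulfV ?gt_eqF // mul1r.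
  rewrite -p_hom ?(ltW s0) // scKV ?gt_eqF // -scN1 scA mulrN1 opprK; lra.
- have [_ +] := gap _ _ (dominated_graphZ t^-1 GG Ga).
  move=> /(ler_wpM2l (ltW t0)); rewrite mulrBr mulrA mulfV ?gt_eqF // mul1r.
  rewrite -p_hom ?(ltW t0) // scKV ?gt_eqF //; lra.
Qed.

Lemma dominated_graph_extend G z : dominated_graph G -> ~ (exists a, G (z, a)) ->
  exists2 G', dominated_graph G' & G `<` G'.
Proof.
move=> GG Gz; have [G_lin G_le Gy] := GG; have [c gap] := dominated_graph_gap z GG.
pose G' := [set xa | exists x a t, G (x, a) /\ xa = (x + sc t z, a + t * c)].
exists G'; last first.
  split; first by move=> [x a] Ga; exists x, a, 0; rewrite sc0 mul0r !addr0.
  move=> G'G; apply: Gz; exists c; apply: G'G; exists 0, 0, 1.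
  by split; [exact: dominated_graph00|rewrite sc1 mul1r !add0r].
split.
- move=> _ _ _ _ s [x [a [t [Ga [-> ->]]]]] [x' [a' [t' [Ga' [-> ->]]]]].
  exists (sc s x + x'), (s * a + a'), (s * t + t'); split; first exact: G_lin.
  congr pair; last by ring.
  by rewrite scDr scDl -scA -!addrA; congr (_ + _); rewrite addrCA.
- move=> _ _ [x [a [t [Ga [-> ->]]]]].
  exact: dominated_graph_le_extension GG gap Ga.
- by exists y, (p y), 0; rewrite sc0 mul0r !addr0.
Qed.

Lemma hahn_banach_sublinear : exists u : V -> R,
  [/\ forall t x x', u (sc t x + x') = t * u x + u x',
      forall x, u x <= p x & u y = p y].
Proof.
pose G0 := [set xa | exists t, xa = (sc t y, t * p y)].
have G0y : G0 (y, p y) by exists 1; rewrite sc1 mul1r.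
have G0G : dominated_graph G0.
  split=> //.
  - move=> _ _ _ _ t [t1 [-> ->]] [t2 [-> ->]].
    by exists (t * t1 + t2); rewrite scDl scA; congr pair; ring.
  - move=> _ _ [t [-> ->]]; have [t0|t0] := leP 0 t; first by rewrite p_hom.
    have := p_sub (sc t y) (sc (- t) y); rewrite -scDl addrN sc0 sublinear0.
    by rewrite [p (sc (- t) y)]p_hom ?oppr_ge0 ?(ltW t0); lra.
have [G [GG Gmax]] := Zorn_bigcup_nonempty G0G (ex_intro _ _ G0y)
  (fun F FG Fne Ftot => dominated_graph_bigcup Fne FG Ftot).
have Gtot z : exists a, G (z, a).
  apply: contrapT => Gz; have [G' G'G GG'] := dominated_graph_extend GG Gz.
  exact: Gmax GG' G'G.
have [u Gu] := choice Gtot; have [G_lin G_le Gy] := GG.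
exists u; split; last exact: dominated_graph_functional GG (Gu _) Gy.
- move=> t x x'; apply: dominated_graph_functional GG (Gu _) _.
  exact: G_lin _ _ _ _ t (Gu x) (Gu x').
- by move=> x; exact: G_le.
Qed.

End hahn_banach.

Section gauge.
Variable C : set V.
Hypotheses (C_convex : forall x x' t, 0 <= t <= 1 -> C x -> C x' ->
              C (sc t x + sc (1 - t) x'))
  (C0 : C 0) (C_absorbing : forall x, exists2 t, 0 < t & C (sc t x)).

Definition gauge_set x := [set t : R | 0 < t /\ C (sc t^-1 x)].
Definition gauge x := inf (gauge_set x).

Lemma gauge_set_neq0 x : gauge_set x !=set0.
Proof.
have [t t0 Ct] := C_absorbing x.
by exists t^-1; split; rewrite ?invrK ?invr_gt0.
Qed.

Lemma gauge_set_le t t' x : gauge_set x t -> t <= t' -> gauge_set x t'.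
Proof.
move=> [t0 Ct] tt'; have t'0 : 0 < t' := lt_le_trans t0 tt'; split=> //.
have t01 : 0 <= t / t' <= 1.
  by rewrite divr_ge0 ?(ltW t0) ?(ltW t'0) //= ler_pdivrMr // mul1r.
have := C_convex t01 Ct C0.
by rewrite scr0 addr0 scA mulrAC mulfV ?gt_eqF // mul1r.
Qed.

Lemma gauge_le x t : gauge_set x t -> gauge x <= t.
Proof. by move=> xt; apply: ge_inf => //; exists 0 => s [s0 _]; exact: ltW. Qed.

Lemma gauge_set_gt x t : gauge x < t -> gauge_set x t.
Proof.
by move=> /(inf_lt (gauge_set_neq0 x)) [s xs st]; exact: gauge_set_le xs (ltW st).
Qed.

Lemma gauge_ge0 x : 0 <= gauge x.
Proof. by apply: lb_le_inf (gauge_set_neq0 x) _ => t [t0 _]; exact: ltW. Qed.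

Lemma gauge_subadditive x x' : gauge (x + x') <= gauge x + gauge x'.
Proof.
apply/ler_addgt0Pr => e e0; have e20 : 0 < e / 2 by rewrite divr_gt0.
have [s0 Cs] := gauge_set_gt (ltr_pwDr e20 (lexx (gauge x))).
have [s'0 Cs'] := gauge_set_gt (ltr_pwDr e20 (lexx (gauge x'))).
set s := gauge x + e / 2 in s0 Cs *; set s' := gauge x' + e / 2 in s'0 Cs' *.
have ss'0 : 0 < s + s' by exact: addr_gt0.
suff /gauge_le : gauge_set (x + x') (s + s') by rewrite /s /s'; lra.
have t01 : 0 <= s / (s + s') <= 1.
  by rewrite divr_ge0 ?(ltW s0) ?(ltW ss'0) //= ler_pdivrMr // mul1r lerDl ltW.
split=> //; have := C_convex t01 Cs Cs'.
have -> : 1 - s / (s + s') = s' / (s + s') by field; rewrite gt_eqF.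
have e1 : s / (s + s') * s^-1 = (s + s')^-1 by field; rewrite !gt_eqF.
have e2 : s' / (s + s') * s'^-1 = (s + s')^-1 by field; rewrite !gt_eqF.
by rewrite !scA e1 e2 -scDr.
Qed.

Lemma gauge_homogeneous_le a x : 0 < a -> gauge (sc a x) <= a * gauge x.
Proof.
move=> a0; apply/ler_addgt0Pr => e e0.
have [s0 Cs] := gauge_set_gt (ltr_pwDr (divr_gt0 e0 a0) (lexx (gauge x))).
suff /gauge_le : gauge_set (sc a x) (a * (gauge x + e / a)).
  by rewrite mulrDr mulrCA mulfV ?gt_eqF // mulr1.
split; first exact: mulr_gt0.
by rewrite scA invfM mulrAC mulVf ?gt_eqF // mul1r.
Qed.

Lemma gauge_homogeneous a x : 0 <= a -> gauge (sc a x) = a * gauge x.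
Proof.
rewrite le0r => /orP[/eqP ->|a0].
  rewrite mul0r sc0; apply/eqP; rewrite eq_le gauge_ge0 andbT.
  apply/ler_addgt0Pr => e e0; rewrite add0r.
  by apply: gauge_le; split; rewrite ?scr0.
apply/eqP; rewrite eq_le gauge_homogeneous_le //=.
have := @gauge_homogeneous_le a^-1 (sc a x); rewrite invr_gt0 scA mulVf ?gt_eqF //.
by rewrite sc1 -(ler_pM2l a0) mulrA mulfV ?gt_eqF // mul1r; apply.
Qed.

Lemma gauge_separation y : ~ C y -> exists u : V -> R,
  [/\ forall t x x', u (sc t x + x') = t * u x + u x',
      forall c, C c -> u c <= 1 & 1 <= u y].
Proof.
move=> Cy; have [u [u_lin u_le uy]] :=
  hahn_banach_sublinear y gauge_subadditive gauge_homogeneous.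
exists u; split => // [c Cc|].
  by apply: le_trans (u_le c) _; apply: gauge_le; split; rewrite ?invr1 ?sc1.
by rewrite uy leNgt; apply/negP => /gauge_set_gt[_]; rewrite invr1 sc1.
Qed.

End gauge.
End real_scaling.

Section scalar_fun.
Variables (K : pzRingType) (E : lmodType K) (f : E -> K).
Hypothesis f_lin : scalar f.

Lemma scalar_fun0 : f 0 = 0.
Proof.
have := f_lin 1 0 0; rewrite scale1r addr0 mul1r => f00.
by apply: (@addrI _ (f 0)); rewrite addr0 -f00.
Qed.

Lemma scalar_funD x x' : f (x + x') = f x + f x'.
Proof. by have := f_lin 1 x x'; rewrite scale1r mul1r. Qed.

Lemma scalar_funZ a x : f (a *: x) = a * f x.
Proof. by have := f_lin a x 0; rewrite !addr0 scalar_fun0 addr0. Qed.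

Lemma scalar_funB x x' : f (x - x') = f x - f x'.
Proof. by rewrite scalar_funD -scaleN1r scalar_funZ mulN1r. Qed.

End scalar_fun.

Lemma convex_setP (K : numFieldType) (E : lmodType K) (A : set E) :
  convex_set A <->
  forall x x' (t : K), 0 <= t <= 1 -> A x -> A x' -> A (t *: x + (1 - t) *: x').
Proof.
split=> [A_convex x x' t /andP[t0 t1] Ax Ax'|A_convex x x' t].
  by have := A_convex x x' (Itv01 t0 t1) (mem_set Ax) (mem_set Ax'); rewrite inE.
rewrite !inE => Ax Ax'; apply: A_convex => //.
by apply/andP; split; [exact: ge0|exact: le1].
Qed.

Lemma absconvex_separation_real (R : realType) (E : lmodType R) (C : set E) :
  (forall x x' t, 0 <= t <= 1 -> C x -> C x' -> C (t *: x + (1 - t) *: x')) ->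
  (forall l c, `|l| <= 1 -> C c -> C (l *: c)) ->
  (forall x, exists2 t, 0 < t & C (t *: x)) ->
  forall y, ~ C y -> exists f : E -> R,
    [/\ scalar f, forall c, C c -> `|f c| <= 1 & 1 <= `|f y|].
Proof.
move=> C_convex C_balanced C_absorbing y Cy.
have C0 : C 0 by have [t _] := C_absorbing 0; rewrite scaler0.
have [u [u_lin u_le1 uy]] := gauge_separation (@scalerDr R E)
  (fun a b x => scalerDl x a b) (@scalerA R E) (@scale1r R E)
  C_convex C0 C_absorbing Cy.
exists u; split => // [c Cc|]; last exact: le_trans uy (ler_norm _).
rewrite ler_norml u_le1 // andbT.
have := u_le1 _ (C_balanced (-1) c _ Cc); rewrite normrN normr1 lexx.
by rewrite (scalar_funZ u_lin) mulN1r => /(_ isT); rewrite lerNl.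
Qed.

Section complexification.
Local Open Scope complex_scope.
Variables (R : realType) (E : lmodType R[i]).

Definition complexify (u : E -> R) (x : E) : R[i] :=
  (u x)%:C - 'i * (u ('i *: x))%:C.

Variables (u : E -> R).
Hypothesis u_lin : forall t x x', u (t%:C *: x + x') = t * u x + u x'.

Lemma Re_complexify x : complex.Re (complexify u x) = u x.
Proof. by rewrite /complexify; simpc. Qed.

Lemma complexify_scalar : scalar (complexify u).
Proof.
have u0 : u 0 = 0.
  by have := u_lin 1 0 0; rewrite scale1r addr0 mul1r; lra.
have uD x x' : u (x + x') = u x + u x'.
  by have := u_lin 1 x x'; rewrite scale1r mul1r.
have uZ t x : u (t%:C *: x) = t * u x.
  by have := u_lin t x 0; rewrite addr0 u0 addr0.
have fD x x' : complexify u (x + x') = complexify u x + complexify u x'.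
  by rewrite /complexify scalerDr !uD !rmorphD /=; ring.
suff fZ a x : complexify u (a *: x) = a * complexify u x.
  by move=> a x x'; rewrite fD fZ.
case: a => r s.
have rsx : (r +i* s) *: x = r%:C *: x + s%:C *: ('i *: x).
  by rewrite [r +i* s]complexE /= scalerDl scalerA mulrC.
have irsx : 'i *: ((r +i* s) *: x) = r%:C *: ('i *: x) - s%:C *: x.
  rewrite rsx scalerDr !scalerA [_ * s%:C]mulrC -mulrA.
  by rewrite -expr2 sqr_i mulrN1 scaleNr mulrC.
rewrite /complexify irsx rsx uD !uZ -scaleNr -rmorphN uD !uZ.
by move: (u x) (u ('i *: x)) => p q; simpc; congr (_ +i* _); ring.
Qed.

End complexification.

Section complex_separation.
Local Open Scope complex_scope.

Lemma absconvex_separation_complex (R : realType) (E : lmodType R[i])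
    (C : set E) :
  (forall x x' (t : R), 0 <= t <= 1 -> C x -> C x' ->
     C (t%:C *: x + (1 - t)%:C *: x')) ->
  (forall l c, `|l| <= 1 -> C c -> C (l *: c)) ->
  (forall x, exists2 t : R, 0 < t & C (t%:C *: x)) ->
  forall y, ~ C y -> exists f : E -> R[i],
    [/\ scalar f, forall c, C c -> `|f c| <= 1 & 1 <= `|f y|].
Proof.
move=> C_convex C_balanced C_absorbing y Cy.
have C0 : C 0 by have [t _] := C_absorbing 0; rewrite scaler0.
pose sc (t : R) (x : E) := t%:C *: x.
have scDr t x x' : sc t (x + x') = sc t x + sc t x'.
  by rewrite /sc scalerDr.
have scDl t t' x : sc (t + t') x = sc t x + sc t' x.
  by rewrite /sc rmorphD scalerDl.
have scA t t' x : sc t (sc t' x) = sc (t * t') x.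
  by rewrite /sc scalerA rmorphM.
have sc1 x : sc 1 x = x by rewrite /sc rmorph1 scale1r.
have [u [u_lin u_le1 uy]] := gauge_separation scDr scDl scA sc1
  C_convex C0 C_absorbing Cy.
pose f := complexify u; have f_lin : scalar f := complexify_scalar u_lin.
exists f; split => // [c Cc|]; last first.
  apply: le_trans (normc_ge_Re (f y)).
  rewrite Re_complexify -(rmorph1 (real_complex R)) lecR.
  exact: le_trans uy (ler_norm _).
have [->|fc0] := eqVneq (f c) 0; first by rewrite normr0 ler01.
(* Rotating [c] by [w] makes [f (w *: c)] real and nonnegative. *)
pose w := (f c)^* / `|f c|.
have nfc0 : `|f c| != 0 by rewrite normr_eq0.
have w_le1 : `|w| <= 1 by rewrite /w normrM normcJ normfV normr_id mulfV.
have fwc : f (w *: c) = `|f c|.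
  by rewrite (scalar_funZ f_lin) /w mulrAC [_^* * _]mulrC -sqr_normc expr2 mulrK.
have := u_le1 _ (C_balanced w c w_le1 Cc).
rewrite -Re_complexify -/f fwc normc_def /= => fc_le1.
by rewrite -(rmorph1 (real_complex R)) lecR.
Qed.

End complex_separation.

Section tvs_facts.
Context {K : numFieldType}.

Lemma ltr_half (e : K) : 0 < e -> e / 2 < e.
Proof. by move=> e0; rewrite ltr_pdivrMr // ltr_pMr // ltr1n. Qed.

Lemma normfV_lt (l d : K) : 0 < d -> d^-1 < `|l| -> `|l^-1| < d.
Proof.
move=> d0 dl; have l0 : 0 < `|l| by apply: lt_trans dl; rewrite invr_gt0.
by rewrite normfV -[d]invrK ltf_pV2 // posrE ?invr_gt0.
Qed.

Lemma normfV_le (l d : K) : 0 < d -> d^-1 <= `|l| -> `|l^-1| <= d.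
Proof.
move=> d0 dl; have l0 : 0 < `|l| by apply: lt_le_trans dl; rewrite invr_gt0.
by rewrite normfV -[d]invrK lef_pV2 // posrE ?invr_gt0.
Qed.

Lemma nbhs0_absorbs_set1 (E : tvsType K) (U : set E) (x : E) :
  nbhs 0 U -> absorbs U [set x].
Proof.
move=> U0; have /= := scale_continuous (0, x) U.
rewrite scale0r => /(_ U0)[]/= [B B'] [B0 B'x] BU.
have [d /= d0 dB] := (nbhs_ballP _ _).1 B0.
have d2_gt0 : 0 < d^-1 + d^-1 by rewrite addr_gt0 // invr_gt0.
exists (d^-1 + d^-1) => // l dl _ ->.
have dl' : d^-1 < `|l| by apply: lt_le_trans dl; rewrite ltrDl invr_gt0.
have l0 : l != 0 by rewrite -normr_eq0 gt_eqF // (lt_trans _ dl') ?invr_gt0.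
exists (l^-1 *: x); last by rewrite scalerA mulfV // scale1r.
apply: (BU (l^-1, x)); split; last exact: nbhs_singleton.
by apply: dB; rewrite /ball /= sub0r normrN; exact: normfV_lt.
Qed.

Lemma tvs_bounded_set1 (E : tvsType K) (x : E) : tvs_bounded [set x].
Proof. by move=> U U0; exact: nbhs0_absorbs_set1. Qed.

Lemma absorbing_scale (E : tvsType K) (C : set E) :
  absorbing C -> forall x, exists2 r : K, 0 < r & C (r *: x).
Proof.
move=> C_absorbing x; have [r r0 /(_ r)] := C_absorbing x.
case/(_ _ x erefl) => [|c Cc rcx]; first by rewrite gtr0_norm.
by exists r^-1; rewrite ?invr_gt0 // -rcx scalerA mulVf ?gt_eqF // scale1r.
Qed.

Lemma scalar_continuous_bounded_nbhs0 (E : tvsType K) (C : set E) (f : E -> K) :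
  nbhs 0 C -> scalar f -> (forall c, C c -> `|f c| <= 1) -> continuous f.
Proof.
move=> C0 f_lin f_le1 x0; apply/cvgrPdist_lt => e e0.
have e20 : 0 < e / 2 by rewrite divr_gt0.
apply: filterS (nbhsT x0 (nbhs0Z (lt0r_neq0 e20) C0)) => _ [_ [c Cc <-] <-].
rewrite (scalar_funD f_lin) (scalar_funZ f_lin) opprD addrA subrr sub0r normrN.
rewrite normrM gtr0_norm //.
exact: le_lt_trans (ler_piMr (ltW e20) (f_le1 _ Cc)) (ltr_half e0).
Qed.

Lemma nbhs0_absconvex (E : tvsType K) (U : set E) : nbhs 0 U ->
  exists C : set E, [/\ nbhs 0 C, C `<=` U & absolutely_convex C].
Proof.
move=> U0; have [Bs Bs_convex [Bs_open Bs_basis]] := @locally_convex K E.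
have [N [BsN N0] NU] := Bs_basis 0 U U0.
have N_cvx := (convex_setP N).1 (Bs_convex _ (mem_set BsN)).
pose C := [set x : E | forall l : K, `|l| <= 1 -> N (l *: x)].
exists C; split.
- have /= := scale_continuous (0, 0) N.
  rewrite scale0r => /(_ (open_nbhs_nbhs (conj (Bs_open _ BsN) N0)))[]/= [B B'].
  move=> [B0 B'0] BB'N; have [d /= d0 dB] := (nbhs_ballP _ _).1 B0.
  have d20 : 0 < d / 2 by rewrite divr_gt0.
  apply: filterS (nbhs0Z (lt0r_neq0 d20) B'0) => _ [a B'a <-] l l1.
  rewrite scalerA; apply: (BB'N (l * (d / 2), a)); split => //=.
  apply: dB; rewrite /ball /= sub0r normrN normrM.
  apply: le_lt_trans (ler_piMl (normr_ge0 _) l1) _.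
  by rewrite gtr0_norm // ltr_half.
- by move=> x /(_ 1); rewrite normr1 scale1r => /(_ (lexx _)); exact: NU.
- split.
  + apply/convex_setP => x x' t t01 Cx Cx' l l1.
    rewrite scalerDr !scalerA [l * _]mulrC [l * (1 - _)]mulrC -!scalerA.
    exact: N_cvx t01 (Cx l l1) (Cx' l l1).
  + move=> l l1 _ [x Cx <-] l' l'1; rewrite scalerA; apply: Cx.
    by rewrite normrM; apply: le_trans (ler_piMr (normr_ge0 _) l1) _.
Qed.

End tvs_facts.

Section absconvex_separation.
Local Open Scope complex_scope.

Lemma absconvex_separation (R : realType) (b : bool) (E : tvsType (RC R b))
    (C : set E) :
  absolutely_convex C -> absorbing C -> forall y, ~ C y ->
  exists f : E -> RC R b,
    [/\ scalar f, forall c, C c -> `|f c| <= 1 & 1 <= `|f y|].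
Proof.
move=> [/convex_setP C_convex C_balanced] /absorbing_scale C_absorbing y Cy.
have {C_balanced} C_bal l c : `|l| <= 1 -> C c -> C (l *: c).
  by move=> l1 Cc; apply: (C_balanced l l1); exists c.
case: b E C C_convex C_absorbing y Cy C_bal => E C C_convex C_absorbing y Cy C_bal.
  exact: absconvex_separation_real.
apply: absconvex_separation_complex => // [x x' t t01 Cx Cx'|x].
  have t01C : (0 : R[i]) <= t%:C <= 1.
    by rewrite ler0c -(rmorph1 (real_complex R)) lecR.
  by have := C_convex x x' _ t01C Cx Cx'; rewrite rmorphB rmorph1.
have [r r0 Crx] := C_absorbing x; exists (complex.Re r).
  by move: r0; rewrite ltcE => /andP[].
by rewrite RRe_real // gtr0_real.
Qed.

End absconvex_separation.

Lemma nbhs0_separation (R : realType) (b : bool) (E : tvsType (RC R b))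
    (C : set E) (y : E) :
  nbhs 0 C -> absolutely_convex C -> ~ C y -> exists f : E -> RC R b,
    [/\ cont_linear f, forall c, C c -> `|f c| <= 1 & 1 <= `|f y|].
Proof.
move=> C0 C_absconvex Cy.
have C_absorbing : absorbing C by move=> x; exact: nbhs0_absorbs_set1.
have [f [f_lin f_le1 fy]] := absconvex_separation C_absconvex C_absorbing Cy.
exists f; split => //; split => //.
exact: scalar_continuous_bounded_nbhs0 C0 f_lin f_le1.
Qed.

Section strong_ball.
Context {K : numFieldType} (E : tvsType K).

(* The supremum over [A], not each value, stays below [e]: the pointwise
   condition would not define a strongly open set. *)
Definition strong_ball (A : set E) (f : E -> K) (e : K) : set (E -> K) :=
  [set g | cont_linear g /\ exists2 s, s < e & forall a, A a -> `|g a - f a| <= s].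

Lemma strong_open_ball A f e : tvs_bounded A -> strong_open (strong_ball A f e).
Proof.
move=> A_bounded; split=> [g []//|g [g_cl [s se gs]]].
exists A; split => //; have es2 : 0 < (e - s) / 2 by rewrite divr_gt0 ?subr_gt0.
exists ((e - s) / 2) => // h [h_cl hg]; split => //.
exists (s + (e - s) / 2).
  by rewrite -ltrBrDl ltr_half ?subr_gt0.
move=> a Aa; apply: le_trans (ler_distD (g a) _ _) _.
by rewrite addrC; apply: lerD; [exact: gs|exact/ltW/hg].
Qed.

Lemma strong_ball_center A f e : cont_linear f -> 0 < e -> strong_ball A f e f.
Proof.
by move=> f_cl e0; split => //; exists 0 => // a _; rewrite subrr normr0.
Qed.

End strong_ball.

Section predual.
Variables (R : realType) (b : bool) (X Y : tvsType (RC R b)).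
Variable phi : X -> Y -> RC R b.
Hypotheses (phi_cl : forall x, cont_linear (phi x))
  (phi_lin : forall a x x' y, phi (a *: x + x') y = a * phi x y + phi x' y)
  (phi_inj : injective phi)
  (phi_cont : forall V, strong_open V -> open (phi @^-1` V))
  (phi_open : forall U, open U ->
     exists V, strong_open V /\ phi @` U = V `&` range phi)
  (phi_onto : forall f, cont_linear f -> exists x, phi x = f).

Local Notation Phi := (fun (y : Y) (x : X) => phi x y).

Lemma pairing_scalar y : scalar (Phi y).
Proof. by move=> a x x'; exact: phi_lin. Qed.

Lemma pairing0 y : phi 0 y = 0.
Proof. exact: scalar_fun0 (pairing_scalar y). Qed.

Lemma nbhs_phi_strong_ball x0 (A : set Y) e : tvs_bounded A -> 0 < e ->
  nbhs x0 (phi @^-1` strong_ball A (phi x0) e).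
Proof.
move=> A_bounded e0; apply: open_nbhs_nbhs; split.
  exact/phi_cont/strong_open_ball.
exact: strong_ball_center.
Qed.

Lemma pairing_cont_linear y : cont_linear (Phi y).
Proof.
split; first exact: pairing_scalar.
move=> x0; apply/cvgrPdist_lt => e e0.
apply: filterS (nbhs_phi_strong_ball x0 (tvs_bounded_set1 y) e0).
by move=> x [_ [s se xs]]; rewrite distrC (le_lt_trans (xs y erefl)).
Qed.

Lemma pairing_bounded (B : set X) (A : set Y) : tvs_bounded B -> tvs_bounded A ->
  exists2 M, 0 < M & forall x a, B x -> A a -> `|phi x a| <= M.
Proof.
move=> B_bounded A_bounded.
have [r r0 Br] := B_bounded _ (nbhs_phi_strong_ball 0 A_bounded ltr01).
exists r => // x a Bx Aa.
have [n [_ [s s1 ns]] <-] := Br r (ltac:(by rewrite gtr0_norm)) x Bx.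
rewrite (scalar_funZ (pairing_scalar a)) normrM (gtr0_norm r0).
rewrite ler_piMr ?(ltW r0) //.
have := ns a Aa; rewrite pairing0 subr0 => na_le_s.
exact: le_trans na_le_s (ltW s1).
Qed.

Definition polar (B : set X) (e : RC R b) : set Y :=
  [set y | forall x, B x -> `|phi x y| <= e].

Lemma polar_bornivorous B e : tvs_bounded B -> 0 < e -> bornivorous (polar B e).
Proof.
move=> B_bounded e0 A A_bounded.
have [M M0 BA_le] := pairing_bounded B_bounded A_bounded.
have eM0 : 0 < e / M by rewrite divr_gt0.
exists (e / M)^-1; first by rewrite invr_gt0.
move=> l l_ge a Aa.
have l0 : l != 0 by rewrite -normr_eq0 gt_eqF // (lt_le_trans _ l_ge) ?invr_gt0.
exists (l^-1 *: a); last by rewrite scalerA mulfV // scale1r.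
move=> x Bx; rewrite (scalar_funZ (phi_cl x).1) normrM.
apply: le_trans (ler_wpM2l (normr_ge0 _) (BA_le x a Bx Aa)) _.
apply: le_trans (ler_wpM2r (ltW M0) (normfV_le eM0 l_ge)) _.
by rewrite divfK ?gt_eqF.
Qed.

Lemma polar_closed B e : closed (polar B e).
Proof.
move=> y y_cl x Bx; apply/ler_addgt0Pr => eps eps0.
have : \forall z \near y, `|phi x y - phi x z| < eps.
  by move: ((phi_cl x).2 y) => /cvgrPdist_lt; apply.
case/y_cl => z [Dz yz]; rewrite -(subrK (phi x z) (phi x y)).
by apply: le_trans (ler_normD _ _) _; rewrite addrC lerD // ?Dz // ltW.
Qed.

Lemma polar_absolutely_convex B e : absolutely_convex (polar B e).
Proof.
split.
- apply/convex_setP => y y' t /andP[t0 t1] Dy Dy' x Bx.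
  have t1' : 0 <= 1 - t by rewrite subr_ge0.
  rewrite (scalar_funD (phi_cl x).1) !(scalar_funZ (phi_cl x).1).
  apply: le_trans (ler_normD _ _) _.
  have -> : e = t * e + (1 - t) * e by rewrite -mulrDl addrC subrK mul1r.
  rewrite !normrM (ger0_norm t0) (ger0_norm t1').
  by apply: lerD; apply: ler_wpM2l => //; [exact: Dy|exact: Dy'].
- move=> l l1 _ [y Dy <-] x Bx; rewrite (scalar_funZ (phi_cl x).1) normrM.
  by apply: le_trans (ler_piMl (normr_ge0 _) l1) _; exact: Dy.
Qed.

Lemma polar_barrel B e : tvs_bounded B -> 0 < e -> barrel (polar B e).
Proof.
move=> B_bounded e0; split; [exact: polar_closed|exact: polar_absolutely_convex|].
by move=> y; apply: polar_bornivorous => //; exact: tvs_bounded_set1.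
Qed.

Hypothesis Y_quasi_barrelled : quasi_barrelled Y.

Lemma polar_nbhs0 B e : tvs_bounded B -> 0 < e -> nbhs 0 (polar B e).
Proof.
move=> B_bounded e0.
by apply: Y_quasi_barrelled; [exact: polar_barrel|exact: polar_bornivorous].
Qed.

Lemma Phi_strong_continuous V : strong_open V -> open (Phi @^-1` V).
Proof.
move=> [_ V_open]; rewrite openE => y0 Vy0.
have [B [B_bounded [e e0 BV]]] := V_open _ Vy0.
have e20 : 0 < e / 2 by rewrite divr_gt0.
apply: filterS (nbhsT y0 (polar_nbhs0 B_bounded e20)) => _ [d Dd <-].
apply: BV; split; first exact: pairing_cont_linear.
move=> x Bx; rewrite /= (scalar_funD (phi_cl x).1) addrAC subrr add0r.
exact: le_lt_trans (Dd x Bx) (ltr_half e0).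
Qed.

Lemma phi_inverse_nbhs0 (N : set X) : nbhs 0 N -> exists A : set Y,
  tvs_bounded A /\ exists2 e, 0 < e &
    forall x, (forall a, A a -> `|phi x a| < e) -> N x.
Proof.
rewrite nbhsE => -[N' [N'_open N'0] N'N].
have [V [V_open phiN']] := phi_open N'_open.
have [V0 _] : (V `&` range phi) (phi 0) by rewrite -phiN'; exists 0.
have [A [A_bounded [e e0 AV]]] := V_open.2 _ V0.
exists A; split => //; exists e => // x xA.
have : (V `&` range phi) (phi x).
  split; last by exists x.
  apply: AV; split; first exact: phi_cl.
  by move=> a Aa; rewrite pairing0 subr0; exact: xA.
by rewrite -phiN' => -[n N'n /phi_inj <-]; exact: N'N.
Qed.

Lemma nbhs0_sub_polar (W : set Y) : nbhs 0 W -> exists B : set X,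
  tvs_bounded B /\ forall d, (forall x, B x -> `|phi x d| < 1) -> W d.
Proof.
move=> W0; have [C [C0 CW C_absconvex]] := nbhs0_absconvex W0.
pose B := [set x : X | forall c, C c -> `|phi x c| <= 1].
exists B; split; last first.
  move=> d Bd; apply: CW; apply: contrapT => Cd.
  have [f [f_cl f_le1 fd]] := nbhs0_separation C0 C_absconvex Cd.
  have [x phixf] := phi_onto f_cl.
  have : `|f d| < 1.
    by rewrite -phixf; apply: Bd => c Cc; rewrite phixf; exact: f_le1.
  by move=> /lt_le_trans /(_ fd); rewrite ltxx.
move=> N /phi_inverse_nbhs0 [A [A_bounded [e e0 AN]]].
have [r r0 rCA] := A_bounded _ C0.
have er0 : 0 < e / (2 * r) by rewrite divr_gt0 ?mulr_gt0.
exists (e / (2 * r))^-1; first by rewrite invr_gt0.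
move=> l l_ge x Bx.
have l0 : l != 0 by rewrite -normr_eq0 gt_eqF // (lt_le_trans _ l_ge) ?invr_gt0.
exists (l^-1 *: x); last by rewrite scalerA mulfV // scale1r.
apply: AN => a /(rCA r); rewrite gtr0_norm // lexx => /(_ isT) [c Cc <-].
rewrite (scalar_funZ (pairing_scalar _)) (scalar_funZ (phi_cl _).1) !normrM.
rewrite (gtr0_norm r0); apply: le_lt_trans (ltr_half e0).
apply: le_trans (ler_pM (normr_ge0 _) (mulr_ge0 (ltW r0) (normr_ge0 _))
  (normfV_le er0 l_ge) (ler_wpM2l (ltW r0) (Bx c Cc))) _.
by rewrite mulr1 invfM mulrA mulfVK ?gt_eqF.
Qed.

Hypothesis Y_hausdorff : hausdorff_space Y.

Lemma Phi_injective : injective Phi.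
Proof.
move=> y1 y2 Phi12; apply/eqP; rewrite -subr_eq0; apply/eqP.
apply: contrapT => y12.
have [U [U0 Uy]] : exists U : set Y, nbhs 0 U /\ ~ U (y1 - y2).
  apply: contrapT => allU; apply/y12/esym/Y_hausdorff => A B' A0 B'y.
  exists (y1 - y2); split; last exact: nbhs_singleton.
  by apply: contrapT => Ay; apply: allU; exists A.
have [C [C0 CU C_absconvex]] := nbhs0_absconvex U0.
have [f [f_cl _ fy]] := nbhs0_separation C0 C_absconvex (fun Cy => Uy (CU _ Cy)).
have [x phixf] := phi_onto f_cl.
move: fy; rewrite -phixf (scalar_funB (phi_cl x).1).
by rewrite (congr1 (fun g => g x) Phi12) subrr normr0 ler10.
Qed.

(* [V] is the strong interior of [Phi @` U `|` ~` range Phi]. *)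
Lemma Phi_open_onto_range (U : set Y) : open U ->
  exists V, strong_open V /\ Phi @` U = V `&` range Phi.
Proof.
move=> U_open.
pose V := [set g | cont_linear g /\ exists B : set X, tvs_bounded B /\
  exists2 e, 0 < e & forall h, cont_linear h ->
    (forall x, B x -> `|h x - g x| < e) -> range Phi h -> (Phi @` U) h].
exists V; split.
  split=> [g []//|g [g_cl [B [B_bounded [e e0 BU]]]]].
  have e20 : 0 < e / 2 by rewrite divr_gt0.
  exists B; split => //; exists (e / 2) => // g' [g'_cl g'g]; split => //.
  exists B; split => //; exists (e / 2) => // h h_cl hg' h_range.
  apply: BU => // x Bx; apply: le_lt_trans (ler_distD (g' x) _ _) _.
  by rewrite [e]splitr ltrD ?hg' ?g'g.
apply/seteqP; split; last first.
  move=> g [[g_cl [B [_ [e e0 BU]]]] g_range].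
  by apply: BU => // x _; rewrite subrr normr0.
move=> _ [y0 Uy0 <-]; split; last by exists y0.
split; first exact: pairing_cont_linear.
have : nbhs 0 [set d | U (y0 + d)].
  have := nbhsB (- y0) (open_nbhs_nbhs (conj U_open Uy0)).
  by rewrite addNr; apply: filterS => _ [u Uu <-]; rewrite /= addrA subrr add0r.
case/nbhs0_sub_polar => B [B_bounded BU]; exists B; split => //.
exists 1 => // h _ hB [y _ yh]; rewrite -yh in hB; exists y => //.
have : U (y0 + (y - y0)).
  by apply: BU => x Bx; rewrite (scalar_funB (phi_cl x).1); exact: hB.
by rewrite addrC subrK.
Qed.

End predual.

Theorem proposition2p2 (R : realType) (b : bool)
    (X Y : tvsType (RC R b)) (phi : X -> (Y -> RC R b)) :
  hausdorff_space X -> hausdorff_space Y ->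
  top_iso_dual phi ->
  quasi_barrelled Y ->
  top_iso_onto_range (fun (y : Y) (x : X) => phi x y).
Proof.
(* X is Hausdorff anyway, being isomorphic to the strong dual Y_b'. *)
move=> _ Y_hausdorff [[phi_cl phi_lin phi_inj phi_cont phi_open] phi_onto] Y_qb.
split.
- exact: pairing_cont_linear.
- by move=> a y y' x; exact: (phi_cl x).1.
- exact: Phi_injective.
- exact: Phi_strong_continuous.
- exact: Phi_open_onto_range.
Qed.
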